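(* For every $\Lambda>0$ there exists a smooth, positive, $\pi$-periodic function $f:\mathbb R\to(0,\infty)$ such that \[\int_0^{2\pi}\big|\partial_\theta\log f(\theta+\tfrac\pi2)-\partial_\theta\log f(\theta)\big|^2\big(f(\theta+\tfrac\pi2)+f(\theta)\big)d\theta<\Lambda\int_0^{2\pi}\frac{(f(\theta+\frac\pi2)-f(\theta))^2}{f(\theta+\frac\pi2)+f(\theta)}\,d\theta.\] *)

From Stdlib Require Import Reals.
From Coquelicot Require Import Coquelicot.
Open Scope R_scope.

Definition smooth (f : R -> R) : Prop := forall (n : nat) (x : R), ex_derive_n f n x.

Definition dlog (f : R -> R) (t : R) : R := Derive (fun s => ln (f s)) t.

From Stdlib Require Import Reals Lra Lia.
From Coquelicot Require Import Coquelicot.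
Open Scope R_scope.

(* Take f = rho (2 - cos 2t) with rho = cos(2t)^(2N) + e, which is PI/2-periodic, so that
   f(t + PI/2) = rho (2 + cos 2t).  The factor rho then drops out of the difference of
   log-derivatives: the left integrand is 256 sin(2t)^2 rho / (4 - cos(2t)^2)^2
   <= 29 (sin(2t)^2 cos(2t)^(2N) + e), while the right integrand is
   rho cos(2t)^2 >= cos(2t)^(2N+2).  Integration by parts gives
   (2N+1) int sin(2t)^2 cos(2t)^(2N) = int cos(2t)^(2N+2) =: J > 0, so the left side is at
   most 29 (J/(2N+1) + 2 PI e) and the right side at least J: take N large and e small. *)

Section DeriveClosed.

Variable C : (R -> R) -> Prop.
Hypothesis C_derive : forall g, C g -> exists g', C g' /\ forall x, is_derive g x (g' x).

Lemma derive_closed_Derive_n n g :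
  C g -> exists h, C h /\ forall x, Derive_n g n x = h x.
Proof.
  revert g; induction n as [|n IHn]; intros g Cg.
  - now exists g.
  - destruct (IHn g Cg) as [h [Ch Eh]].
    destruct (C_derive h Ch) as [h' [Ch' Dh]].
    exists h'; split; [exact Ch'|]; intros x; simpl.
    rewrite (Derive_ext _ _ x Eh); now apply is_derive_unique.
Qed.

Lemma derive_closed_ex_derive g x : C g -> ex_derive g x.
Proof. intros Cg; destruct (C_derive g Cg) as [g' [_ Dg]]; now exists (g' x). Qed.

Lemma derive_closed_smooth g : C g -> smooth g.
Proof.
  intros Cg [|n] x; [exact I|simpl].
  destruct (derive_closed_Derive_n n g Cg) as [h [Ch Eh]].
  apply (ex_derive_ext h); [intros; now rewrite Eh|].
  now apply derive_closed_ex_derive.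
Qed.

Lemma derive_closed_ex_RInt g a b : C g -> ex_RInt g a b.
Proof.
  intros Cg; apply (@ex_RInt_continuous R_CompleteNormedModule); intros x _.
  now apply (@ex_derive_continuous R_AbsRing R_NormedModule), derive_closed_ex_derive.
Qed.

End DeriveClosed.

Inductive trig2_rat : (R -> R) -> Prop :=
  | trig2_const a : trig2_rat (fun _ => a)
  | trig2_cos : trig2_rat (fun x => cos (2 * x))
  | trig2_sin : trig2_rat (fun x => sin (2 * x))
  | trig2_plus g h : trig2_rat g -> trig2_rat h -> trig2_rat (fun x => g x + h x)
  | trig2_mult g h : trig2_rat g -> trig2_rat h -> trig2_rat (fun x => g x * h x)
  | trig2_inv g : trig2_rat g -> (forall x, g x <> 0) -> trig2_rat (fun x => / g x)
  | trig2_ext g h : trig2_rat g -> (forall x, g x = h x) -> trig2_rat h.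

Lemma trig2_scal c g : trig2_rat g -> trig2_rat (fun x => c * g x).
Proof. intros; apply trig2_mult; [apply trig2_const|assumption]. Qed.

Lemma trig2_opp g : trig2_rat g -> trig2_rat (fun x => - g x).
Proof.
  intros Hg; apply (trig2_ext (fun x => -1 * g x)); [now apply trig2_scal|].
  intros; ring.
Qed.

Lemma trig2_minus g h : trig2_rat g -> trig2_rat h -> trig2_rat (fun x => g x - h x).
Proof. intros; now apply trig2_plus, trig2_opp. Qed.

Lemma trig2_div g h :
  trig2_rat g -> trig2_rat h -> (forall x, h x <> 0) -> trig2_rat (fun x => g x / h x).
Proof. intros; now apply trig2_mult, trig2_inv. Qed.

Lemma trig2_pow g n : trig2_rat g -> trig2_rat (fun x => g x ^ n).
Proof.
  intros Hg; induction n as [|n IHn].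
  - apply (trig2_ext (fun _ => 1)); [apply trig2_const|easy].
  - now apply trig2_mult.
Qed.

Lemma trig2_derive g :
  trig2_rat g -> exists g', trig2_rat g' /\ forall x, is_derive g x (g' x).
Proof.
  induction 1 as [a| | |g h _ [g' [Hg' Dg]] _ [h' [Hh' Dh]]
                 |g h Hg [g' [Hg' Dg]] Hh [h' [Hh' Dh]]|g Hg [g' [Hg' Dg]] Hg0
                 |g h _ [g' [Hg' Dg]] Egh].
  - exists (fun _ => 0); split; [apply trig2_const|intros x; apply (is_derive_const a x)].
  - exists (fun x => -2 * sin (2 * x)); split; [apply trig2_scal, trig2_sin|].
    intros x; auto_derive; [easy|ring].
  - exists (fun x => 2 * cos (2 * x)); split; [apply trig2_scal, trig2_cos|].
    intros x; auto_derive; [easy|ring].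
  - exists (fun x => g' x + h' x); split; [now apply trig2_plus|].
    intros x; apply (is_derive_plus g h); [apply Dg|apply Dh].
  - exists (fun x => g' x * h x + g x * h' x); split.
    + apply trig2_plus; apply trig2_mult; assumption.
    + intros x; apply (is_derive_mult g h); auto; intros; apply Rmult_comm.
  - exists (fun x => - g' x / g x ^ 2); split.
    + apply trig2_div; [now apply trig2_opp|now apply trig2_pow|].
      intros x; now apply pow_nonzero.
    + intros x; now apply (is_derive_inv g).
  - exists g'; split; [assumption|intros x; now apply (is_derive_ext g h)].
Qed.

Lemma trig2_smooth g : trig2_rat g -> smooth g.
Proof. apply derive_closed_smooth, trig2_derive. Qed.

Lemma trig2_ex_derive g x : trig2_rat g -> ex_derive g x.
Proof. apply derive_closed_ex_derive, trig2_derive. Qed.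

Lemma trig2_ex_RInt g a b : trig2_rat g -> ex_RInt g a b.
Proof. apply derive_closed_ex_RInt, trig2_derive. Qed.

Ltac trig2 :=
  repeat first [ apply trig2_const | apply trig2_cos | apply trig2_sin
               | apply trig2_plus | apply trig2_minus | apply trig2_opp
               | apply trig2_pow | apply trig2_div | apply trig2_mult ].

Definition cos_moment (m : nat) : R := RInt (fun x => (cos (2 * x) ^ 2) ^ m) 0 (2 * PI).

Lemma RInt_sin2_cos_moment m :
  (2 * INR m + 1) * RInt (fun x => sin (2 * x) ^ 2 * (cos (2 * x) ^ 2) ^ m) 0 (2 * PI)
  = cos_moment (S m).
Proof.
  set (f1 := fun x => (cos (2 * x) ^ 2) ^ S m).
  set (f2 := fun x => sin (2 * x) ^ 2 * (cos (2 * x) ^ 2) ^ m).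
  set (h := fun x => sin (2 * x) * cos (2 * x) * (cos (2 * x) ^ 2) ^ m).
  set (dh := fun x => 2 * f1 x - 2 * (2 * INR m + 1) * f2 x).
  assert (f1_trig : trig2_rat f1) by (unfold f1; trig2).
  assert (f2_trig : trig2_rat f2) by (unfold f2; trig2).
  assert (h_derive : forall x, is_derive h x (dh x)).
  { intros x; unfold h, dh, f1, f2; auto_derive; [easy|].
    destruct m as [|k]; [simpl; ring|rewrite S_INR; simpl; ring]. }
  assert (dh_int0 : is_RInt dh 0 (2 * PI) 0).
  { replace 0 with (minus (h (2 * PI)) (h 0)) at 2.
    - apply (@is_RInt_derive R_CompleteNormedModule); intros x _; [apply h_derive|].
      apply (@ex_derive_continuous R_AbsRing R_NormedModule), trig2_ex_derive.
      unfold dh; trig2; assumption.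
    - unfold h; replace (2 * (2 * PI)) with (2 * PI + 2 * PI) by ring.
      rewrite Rmult_0_r, sin_0, sin_plus, sin_2PI; unfold minus, plus, opp; simpl; ring. }
  assert (dh_int : is_RInt dh 0 (2 * PI)
            (2 * RInt f1 0 (2 * PI) - 2 * (2 * INR m + 1) * RInt f2 0 (2 * PI))).
  { apply (@is_RInt_minus R_CompleteNormedModule);
      apply (@is_RInt_scal R_CompleteNormedModule), RInt_correct;
      now apply trig2_ex_RInt. }
  apply (@is_RInt_unique R_CompleteNormedModule) in dh_int0, dh_int.
  unfold cos_moment; fold f1 f2; lra.
Qed.

Lemma cos_moment_succ m :
  (2 * INR m + 2) * cos_moment (S m) = (2 * INR m + 1) * cos_moment m.
Proof.
  assert (moment_split : cos_moment m
    = RInt (fun x => sin (2 * x) ^ 2 * (cos (2 * x) ^ 2) ^ m) 0 (2 * PI) + cos_moment (S m)).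
  { unfold cos_moment; rewrite <- (@RInt_plus R_CompleteNormedModule)
      by (apply trig2_ex_RInt; trig2).
    apply RInt_ext; intros x _; unfold plus; cbn -[pow sin cos].
    transitivity (((sin (2 * x))² + (cos (2 * x))²) * (cos (2 * x) ^ 2) ^ m).
    - rewrite sin2_cos2; ring.
    - unfold Rsqr; rewrite <- (tech_pow_Rmult (cos (2 * x) ^ 2) m); ring. }
  rewrite moment_split, Rmult_plus_distr_l, RInt_sin2_cos_moment; ring.
Qed.

Lemma cos_moment_pos m : 0 < cos_moment m.
Proof.
  induction m as [|m IHm].
  - unfold cos_moment; simpl; rewrite (@RInt_const R_CompleteNormedModule).
    unfold scal; simpl; unfold mult; simpl; generalize PI_RGT_0; lra.
  - assert (H := cos_moment_succ m); assert (0 <= INR m) by apply pos_INR; nra.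
Qed.

Lemma Derive_periodic f T x : (forall s, f (s + T) = f s) -> Derive f (x + T) = Derive f x.
Proof.
  intros f_per; unfold Derive; f_equal; apply Lim_ext; intros h.
  now rewrite Rplus_assoc, (Rplus_comm T h), <- Rplus_assoc, !f_per.
Qed.

Lemma dlog_periodic f T x : (forall s, f (s + T) = f s) -> dlog f (x + T) = dlog f x.
Proof. intros f_per; apply Derive_periodic; intros s; now rewrite f_per. Qed.

Lemma dlog_mult f g x :
  (forall s, 0 < f s) -> (forall s, 0 < g s) -> ex_derive f x -> ex_derive g x ->
  dlog (fun s => f s * g s) x = dlog f x + dlog g x.
Proof.
  intros f_pos g_pos df dg; unfold dlog.
  rewrite (Derive_ext _ (fun s => ln (f s) + ln (g s))) by (intros; now apply ln_mult).
  apply Derive_plus; apply (ex_derive_comp ln); auto; eexists; apply is_derive_ln;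
    [apply f_pos|apply g_pos].
Qed.

Lemma cos_2_add_PI2 x : cos (2 * (x + PI / 2)) = - cos (2 * x).
Proof. replace (2 * (x + PI / 2)) with (2 * x + PI) by field; apply neg_cos. Qed.

Lemma sin_2_add_PI2 x : sin (2 * (x + PI / 2)) = - sin (2 * x).
Proof. replace (2 * (x + PI / 2)) with (2 * x + PI) by field; apply neg_sin. Qed.

Lemma two_sub_cos_pos x : 0 < 2 - cos (2 * x).
Proof. generalize (COS_bound (2 * x)); lra. Qed.

Lemma dlog_two_sub_cos x :
  dlog (fun s => 2 - cos (2 * s)) x = 2 * sin (2 * x) / (2 - cos (2 * x)).
Proof.
  apply is_derive_unique; auto_derive; [apply two_sub_cos_pos|].
  field; apply Rgt_not_eq, two_sub_cos_pos.
Qed.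

Definition peak (N : nat) (e x : R) : R := (cos (2 * x) ^ 2) ^ N + e.

Definition test_fun (N : nat) (e x : R) : R := peak N e x * (2 - cos (2 * x)).

Section TestFunction.

Variables (N : nat) (e : R).
Hypothesis e_pos : 0 < e.

Lemma peak_pos x : 0 < peak N e x.
Proof. unfold peak; assert (0 <= (cos (2 * x) ^ 2) ^ N) by (apply pow_le, pow2_ge_0); lra. Qed.

Lemma test_fun_pos x : 0 < test_fun N e x.
Proof. apply Rmult_lt_0_compat; [apply peak_pos|apply two_sub_cos_pos]. Qed.

Lemma peak_add_PI2 x : peak N e (x + PI / 2) = peak N e x.
Proof. unfold peak; rewrite cos_2_add_PI2; f_equal; f_equal; ring. Qed.

Lemma test_fun_add_PI2 x : test_fun N e (x + PI / 2) = peak N e x * (2 + cos (2 * x)).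
Proof. unfold test_fun; rewrite peak_add_PI2, cos_2_add_PI2; ring. Qed.

Lemma test_fun_add_PI x : test_fun N e (x + PI) = test_fun N e x.
Proof.
  replace (x + PI) with (x + PI / 2 + PI / 2) by field.
  rewrite !test_fun_add_PI2, peak_add_PI2, cos_2_add_PI2; unfold test_fun; ring.
Qed.

Lemma test_fun_smooth : smooth (test_fun N e).
Proof. apply trig2_smooth; unfold test_fun, peak; trig2. Qed.

Lemma dlog_test_fun_sub t :
  dlog (test_fun N e) (t + PI / 2) - dlog (test_fun N e) t
  = - 8 * sin (2 * t) / (4 - cos (2 * t) ^ 2).
Proof.
  assert (peak_trig : trig2_rat (peak N e)) by (unfold peak; trig2).
  assert (w_trig : trig2_rat (fun s => 2 - cos (2 * s))) by trig2.
  unfold test_fun; rewrite !dlog_mult; try apply peak_pos; try apply two_sub_cos_pos;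
    try now apply trig2_ex_derive.
  rewrite dlog_periodic by apply peak_add_PI2.
  rewrite !dlog_two_sub_cos, sin_2_add_PI2, cos_2_add_PI2.
  assert (c_bound := COS_bound (2 * t)).
  field; repeat split; nra.
Qed.

Lemma log_energy_integrand_le t :
  (dlog (test_fun N e) (t + PI / 2) - dlog (test_fun N e) t) ^ 2
    * (test_fun N e (t + PI / 2) + test_fun N e t)
  <= 29 * (sin (2 * t) ^ 2 * (cos (2 * t) ^ 2) ^ N + e).
Proof.
  rewrite dlog_test_fun_sub, test_fun_add_PI2; unfold test_fun.
  assert (c_bound := COS_bound (2 * t)); assert (s_bound := SIN_bound (2 * t)).
  assert (y_nonneg : 0 <= (cos (2 * t) ^ 2) ^ N) by (apply pow_le, pow2_ge_0).
  unfold peak; set (c := cos (2 * t)) in *; set (s := sin (2 * t)) in *;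
    set (y := (c ^ 2) ^ N) in *.
  assert (denom_ge : 3 <= 4 - c ^ 2) by nra.
  replace ((-8 * s / (4 - c ^ 2)) ^ 2 * ((y + e) * (2 + c) + (y + e) * (2 - c)))
    with (s ^ 2 * (y + e) * (256 / (4 - c ^ 2) ^ 2)) by (field; lra).
  assert (ratio_le : 256 / (4 - c ^ 2) ^ 2 <= 29).
  { apply Rmult_le_reg_r with ((4 - c ^ 2) ^ 2); [nra|].
    unfold Rdiv; rewrite Rmult_assoc, Rinv_l by nra; nra. }
  assert (0 <= s ^ 2 * (y + e)) by (apply Rmult_le_pos; [apply pow2_ge_0|lra]).
  assert (s ^ 2 <= 1) by nra.
  nra.
Qed.

Lemma chi2_gap_integrand_eq t :
  (test_fun N e (t + PI / 2) - test_fun N e t) ^ 2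
    / (test_fun N e (t + PI / 2) + test_fun N e t)
  = peak N e t * cos (2 * t) ^ 2.
Proof.
  rewrite test_fun_add_PI2; unfold test_fun.
  field; generalize (peak_pos t); lra.
Qed.

Lemma chi2_gap_integrand_ge t :
  (cos (2 * t) ^ 2) ^ S N
  <= (test_fun N e (t + PI / 2) - test_fun N e t) ^ 2
     / (test_fun N e (t + PI / 2) + test_fun N e t).
Proof.
  rewrite chi2_gap_integrand_eq; unfold peak.
  rewrite <- (tech_pow_Rmult (cos (2 * t) ^ 2) N).
  assert (0 <= e * cos (2 * t) ^ 2) by (apply Rmult_le_pos; [lra|apply pow2_ge_0]).
  lra.
Qed.

End TestFunction.

Definition log_energy (f : R -> R) : R :=
  RInt (fun t => (dlog f (t + PI / 2) - dlog f t) ^ 2 * (f (t + PI / 2) + f t)) 0 (2 * PI).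

Definition chi2_gap (f : R -> R) : R :=
  RInt (fun t => (f (t + PI / 2) - f t) ^ 2 / (f (t + PI / 2) + f t)) 0 (2 * PI).

Lemma log_energy_test_fun_le N e : 0 < e ->
  log_energy (test_fun N e) <= 29 * (cos_moment (S N) / (2 * INR N + 1) + 2 * PI * e).
Proof.
  intros e_pos.
  set (f2 := fun t => sin (2 * t) ^ 2 * (cos (2 * t) ^ 2) ^ N).
  assert (f2_int : ex_RInt f2 0 (2 * PI)) by (apply trig2_ex_RInt; unfold f2; trig2).
  assert (bound_int : is_RInt (fun t => 29 * (f2 t + e)) 0 (2 * PI)
                        (29 * (cos_moment (S N) / (2 * INR N + 1) + 2 * PI * e))).
  { assert (f2_moment : cos_moment (S N) / (2 * INR N + 1) = RInt f2 0 (2 * PI)).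
    { rewrite <- RInt_sin2_cos_moment; unfold f2; field.
      assert (0 <= INR N) by apply pos_INR; lra. }
    rewrite f2_moment.
    apply (@is_RInt_scal R_CompleteNormedModule), (@is_RInt_plus R_CompleteNormedModule);
      [now apply RInt_correct|].
    replace (2 * PI * e) with (scal (2 * PI - 0) e)
      by (unfold scal; simpl; unfold mult; simpl; ring).
    apply (@is_RInt_const R_CompleteNormedModule). }
  rewrite <- (is_RInt_unique _ _ _ _ bound_int).
  apply RInt_le; [generalize PI_RGT_0; lra| |eexists; apply bound_int|].
  - apply (ex_RInt_ext (fun t => (- 8 * sin (2 * t) / (4 - cos (2 * t) ^ 2)) ^ 2
                                  * (peak N e t * (2 + cos (2 * t)) + test_fun N e t))).
    + intros t _; now rewrite dlog_test_fun_sub, test_fun_add_PI2.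
    + apply trig2_ex_RInt; unfold test_fun, peak; trig2.
      intros t; assert (c_bound := COS_bound (2 * t)); nra.
  - intros t _; now apply log_energy_integrand_le.
Qed.

Lemma cos_moment_le_chi2_gap N e : 0 < e -> cos_moment (S N) <= chi2_gap (test_fun N e).
Proof.
  intros e_pos; apply RInt_le; [generalize PI_RGT_0; lra|apply trig2_ex_RInt; trig2| |].
  - apply (ex_RInt_ext (fun t => peak N e t * cos (2 * t) ^ 2)).
    + intros t _; symmetry; now apply chi2_gap_integrand_eq.
    + apply trig2_ex_RInt; unfold peak; trig2.
  - intros t _; now apply chi2_gap_integrand_ge.
Qed.

Theorem lemma8p1 :
  forall Lambda : R, 0 < Lambda ->
  exists f : R -> R,
    smooth f /\
    (forall x, 0 < f x) /\
    (forall x, f (x + PI) = f x) /\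
    RInt (fun t => (dlog f (t + PI / 2) - dlog f t) ^ 2 * (f (t + PI / 2) + f t)) 0 (2 * PI)
    < Lambda * RInt (fun t => (f (t + PI / 2) - f t) ^ 2 / (f (t + PI / 2) + f t)) 0 (2 * PI).
Proof.
  intros L L_pos; assert (PI_pos := PI_RGT_0).
  destruct (archimed_cor1 (L / 58)) as [N [N_inv N_pos]]; [lra|].
  assert (N_large : 58 < L * (2 * INR N + 1)).
  { assert (0 < INR N) by (apply lt_0_INR; lia).
    assert (INR N * / INR N = 1) by (field; lra).
    nra. }
  set (J := cos_moment (S N)); assert (J_pos : 0 < J) by apply cos_moment_pos.
  set (e := L * J / (116 * PI)).
  assert (e_pos : 0 < e) by (unfold e; apply Rdiv_lt_0_compat; nra).
  exists (test_fun N e); split; [|split; [|split]].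
  - apply test_fun_smooth.
  - now apply test_fun_pos.
  - now apply test_fun_add_PI.
  - change (log_energy (test_fun N e) < L * chi2_gap (test_fun N e)).
    assert (energy_le := log_energy_test_fun_le N e e_pos).
    assert (gap_ge := cos_moment_le_chi2_gap N e e_pos).
    assert (e_term : 29 * (2 * PI * e) = L * J / 2) by (unfold e; field; lra).
    assert (moment_term : 29 * (J / (2 * INR N + 1)) < L * J / 2).
    { assert (0 <= INR N) by apply pos_INR.
      apply Rmult_lt_reg_r with (2 * (2 * INR N + 1)); [lra|].
      field_simplify; [nra|lra]. }
    fold J in energy_le, gap_ge.
    assert (L * J <= L * chi2_gap (test_fun N e)) by (apply Rmult_le_compat_l; lra).
    lra.
Qed.
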